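(* Let $n\geq7$ and let $u,u',v,v'$ be monomials such that $x_{n-1}u,x_{n-1}u'\in\mathcal A$ and $x_nv,x_nv'\in\mathcal C$. If $uv>_{\mathcal R}u'v'$ in $F(J(P_{n-2})^2)$, then $x_{n-1}x_nuv>_{\mathcal R}x_{n-1}x_nu'v'$ in $F(J(P_n)^2)$.
   Context: For $m\geq 1$, $P_m$ is the path graph on vertices $x_1,\ldots,x_m$ with edges $\{x_i,x_{i+1}\}$; $J(P_m)$ is its cover ideal (generated by $\prod_{x\in C}x$, $C$ a minimal vertex cover); $G(I)$ denotes minimal monomial generators and $F(I^2)=\{ab:a,b\in G(I)\}$. The rooted list $\mathcal R(P_m)$: $\mathcal R(P_1)$ empty; $\mathcal R(P_2)=x_1,x_2$; $\mathcal R(P_3)=x_2,x_1x_3$; $\mathcal R(P_4)=x_1x_3,x_2x_3,x_2x_4$; for $m\geq5$, if $\mathcal R(P_{m-2})=u_1,\ldots,u_r$ and $\mathcal R(P_{m-3})=v_1,\ldots,v_s$, then $\mathcal R(P_m)=x_{m-1}u_1,\ldots,x_{m-1}u_r,x_mx_{m-2}v_1,\ldots,x_mx_{m-2}v_s$; it lists each element of $G(J(P_m))$ once. With $\mathcal R(P_m)=u_1,\ldots,u_q$, each $M\in F(J(P_m)^2)$ is $u_1^{a_1}\cdots u_q^{a_q}$ with $a_i\geq0$, $\sum a_i=2$; its maximal expression is the one with lexicographically largest exponent vector, and $M>_{\mathcal R}N$ on $F(J(P_m)^2)$ iff the maximal-expression exponent vector of $M$ is lexicographically larger than that of $N$. For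 $n\geq7$: $\mathcal A$ is the sublist of $\mathcal R(P_n)$ of elements divisible by $x_{n-1}x_{n-3}$ (equivalently $x_{n-1}x_{n-3}w$, $w\in\mathcal R(P_{n-4})$), and $\mathcal C$ is the sublist of elements divisible by $x_nx_{n-4}$ (equivalently $x_nx_{n-2}x_{n-4}w$, $w\in\mathcal R(P_{n-5})$). *)

From mathcomp Require Import all_boot.
Set Implicit Arguments. Unset Strict Implicit. Unset Printing Implicit Defensive.

(* Monomials in the variables x_1, x_2, ... are represented by their exponent
   vectors  nat -> nat  (index i = exponent of x_i; index 0 is unused).
   Equality of monomials is pointwise equality ( =1 ). *)
Definition mono := nat -> nat.

Definition xv (i : nat) : mono := fun j => (j == i : nat).
Definition mmul (a b : mono) : mono := fun j => a j + b j.
Definition mdvd (d M : mono) : Prop := forall j, d j <= M j.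
Definition mmem (M : mono) (l : seq mono) : Prop :=
  exists2 i, i < size l & nth (fun _ => 0) l i =1 M.

Fixpoint rooted (m : nat) : seq mono :=
  match m with
  | 0 => [::]
  | 1 => [::]
  | 2 => [:: xv 1; xv 2]
  | 3 => [:: xv 2; mmul (xv 1) (xv 3)]
  | 4 => [:: mmul (xv 1) (xv 3); mmul (xv 2) (xv 3); mmul (xv 2) (xv 4)]
  | S (S ((S ((S (S k)) as m3)) as m2)) =>
      (* m = k+5, m2 = m-2, m3 = m-3 *)
      [seq mmul (xv m2.+1) u | u <- rooted m2] ++
      [seq mmul (mmul (xv m2.+2) (xv m2)) w | w <- rooted m3]
  end.

Definition is_expr (m : nat) (a : seq nat) (M : mono) : Prop :=
  size a = size (rooted m) /\ sumn a = 2 /\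
  forall j, \sum_(i < size (rooted m)) nth 0 a i * nth (fun _ => 0) (rooted m) i j = M j.

Fixpoint lexlt (b a : seq nat) : bool :=
  match b, a with
  | y :: b', z :: a' => (y < z) || ((y == z) && lexlt b' a')
  | [::], _ :: _ => true
  | _, _ => false
  end.
Definition lexle (b a : seq nat) : bool := (b == a) || lexlt b a.

Definition is_max_expr (m : nat) (a : seq nat) (M : mono) : Prop :=
  is_expr m a M /\ forall b, is_expr m b M -> lexle b a.

Definition gtR (m : nat) (M N : mono) : Prop :=
  exists a b, [/\ is_max_expr m a M, is_max_expr m b N & lexlt b a].

Definition inA (n : nat) (M : mono) : Prop :=
  mmem M (rooted n) /\ mdvd (mmul (xv n.-1) (xv (n-3))) M.
Definition inC (n : nat) (M : mono) : Prop :=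
  mmem M (rooted n) /\ mdvd (mmul (xv n) (xv (n-4))) M.

From mathcomp Require Import all_boot zify.
Set Implicit Arguments. Unset Strict Implicit. Unset Printing Implicit Defensive.

(* Write R_k for R(P_k). Unfolding the recursion twice, R_n is the concatenation of
   x_{n-1} x_{n-3} R_{n-4} (the list A), x_{n-1} x_{n-2} x_{n-4} R_{n-5},
   x_n x_{n-2} x_{n-4} R_{n-5} (the list C) and x_n x_{n-2} T, where every monomial of T
   contains x_{n-3}; likewise R_{n-2} = x_{n-3} R_{n-4} ++ x_{n-2} x_{n-4} R_{n-5}.
   For u, v as in the statement, W = uv has exponent 1 at x_{n-3} and at x_{n-2} and is
   free of x_{n-1}, x_n. Counting the exponents of x_{n-3}, ..., x_n shows that every
   expression of x_{n-1} x_n W over R_n takes one factor from A and one from C. Hence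
   padding with zeros on the two other blocks is a bijection from the expressions of W
   over R_{n-2} onto those of x_{n-1} x_n W over R_n, and it preserves the lexicographic
   order; so maximal expressions, and with them >_R, correspond. *)

Arguments xv : simpl never.
Arguments mmul : simpl never.

Definition mono1 : mono := fun _ => 0.

Lemma xv_eq i j : i = j -> xv i j = 1.
Proof. by move=> ->; rewrite /xv eqxx. Qed.

Lemma xv_neq i j : i <> j -> xv i j = 0.
Proof. by rewrite /xv; case: eqP => // ->. Qed.

Ltac xv_eval :=
  repeat match goal with |- context [xv ?i ?j] =>
    first [rewrite (@xv_neq i j); last lia | rewrite (@xv_eq i j); last lia]
  end.

Fixpoint prodpow (d : seq nat) (L : seq mono) : mono :=
  match d, L with
  | x :: d', g :: L' => fun j => x * g j + prodpow d' L' j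
  | _, _ => mono1
  end.

Lemma prodpowE d L j : size d = size L ->
  \sum_(i < size L) nth 0 d i * nth mono1 L i j = prodpow d L j.
Proof.
elim: L d => [|g L IH] [|x d] //=; first by rewrite big_ord0.
by case=> size_d; rewrite big_ord_recl IH.
Qed.

Lemma is_exprP m a M : is_expr m a M <->
  [/\ size a = size (rooted m), sumn a = 2 & forall j, prodpow a (rooted m) j = M j].
Proof.
split=> [[size_a [sum_a Ea]] | [size_a sum_a Ea]].
  by split=> // j; rewrite -prodpowE.
by do 2!split=> //; move=> j; rewrite prodpowE.
Qed.

Lemma prodpow_cat d1 d2 L1 L2 j : size d1 = size L1 ->
  prodpow (d1 ++ d2) (L1 ++ L2) j = prodpow d1 L1 j + prodpow d2 L2 j.
Proof. by elim: L1 d1 => [|g L1 IH] [|x d1] //= [/IH->]; rewrite addnA. Qed.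

Lemma prodpow_map_mmul d g L j : size d = size L ->
  prodpow d (map (mmul g) L) j = sumn d * g j + prodpow d L j.
Proof.
elim: L d => [|h L IH] [|x d] //= [/IH->].
by rewrite /mmul mulnDr mulnDl; lia.
Qed.

Lemma prodpow_nseq0 r L j : prodpow (nseq r 0) L j = 0.
Proof. by elim: r L => [|r IH] [|g L] //=; rewrite IH. Qed.

Lemma mmem_cons g h L : mmem g (h :: L) <-> g =1 h \/ mmem g L.
Proof.
split=> [[[|i] ? Eg] | [Eg | [i ? Eg]]]; [left | right; exists i | exists 0 | exists i.+1] => //.
Qed.

Lemma prodpow_eq0 d L j : (forall g, mmem g L -> g j = 0) -> prodpow d L j = 0.
Proof.
elim: L d => [|g L IH] [|x d] //= L0.
rewrite (L0 g) ?muln0 ?IH //; last by apply/mmem_cons; left.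
by move=> h h_in; apply/L0/mmem_cons; right.
Qed.

Lemma rooted_rec m : 5 <= m ->
  rooted m = [seq mmul (xv m.-1) u | u <- rooted (m - 2)] ++
             [seq mmul (mmul (xv m) (xv (m - 2))) w | w <- rooted (m - 3)].
Proof. by case: m => [|[|[|[|[|m]]]]]. Qed.

Lemma size_rooted_rec m : 5 <= m ->
  size (rooted m) = size (rooted (m - 2)) + size (rooted (m - 3)).
Proof. by move=> /rooted_rec->; rewrite size_cat !size_map. Qed.

Lemma prodpow_rooted_rec m d e j : 5 <= m ->
    size d = size (rooted (m - 2)) -> size e = size (rooted (m - 3)) ->
  prodpow (d ++ e) (rooted m) j =
    sumn d * xv m.-1 j + prodpow d (rooted (m - 2)) j
    + (sumn e * (xv m j + xv (m - 2) j) + prodpow e (rooted (m - 3)) j).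
Proof.
by move=> /rooted_rec-> size_d size_e; rewrite prodpow_cat ?size_map // !prodpow_map_mmul.
Qed.

Lemma mmem_rooted_rec m g : 5 <= m -> mmem g (rooted m) ->
  (exists2 h, mmem h (rooted (m - 2)) & g =1 mmul (xv m.-1) h) \/
  (exists2 h, mmem h (rooted (m - 3)) & g =1 mmul (mmul (xv m) (xv (m - 2))) h).
Proof.
move=> /rooted_rec-> [i]; rewrite size_cat !size_map nth_cat size_map.
case: (ltnP i (size (rooted (m - 2)))) => [lt_i _ Eg | le_i lt_i Eg].
  left; exists (nth mono1 (rooted (m - 2)) i); first by exists i => [|?].
  by move=> j; rewrite -Eg (nth_map mono1).
right; exists (nth mono1 (rooted (m - 3)) (i - size (rooted (m - 2)))).
  by exists (i - size (rooted (m - 2))) => [|?] //; lia.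
by move=> j; rewrite -Eg (nth_map mono1) //; lia.
Qed.

Lemma mmem_rooted_out m g j : mmem g (rooted m) -> m < j -> g j = 0.
Proof.
elim/ltn_ind: m g => m IH g.
case: (ltnP m 5) => [m_lt5 [i lt_i <-] | m_ge5].
  clear IH; case: m m_lt5 lt_i => [|[|[|[|[|m]]]]] // _;
    by case: i => [|[|[|i]]] //= _ lt_mj; rewrite /mmul; xv_eval.
case/(mmem_rooted_rec m_ge5) => [[h h_in Eg] | [h h_in Eg]] lt_mj;
  rewrite Eg /mmul (IH _ _ _ h_in); xv_eval; lia.
Qed.

Lemma prodpow_rooted_out m d j : m < j -> prodpow d (rooted m) j = 0.
Proof. by move=> lt_mj; apply: prodpow_eq0 => g /mmem_rooted_out; apply. Qed.

Lemma mmem_rooted_last2 m g : 2 <= m -> mmem g (rooted m) -> g m.-1 + g m = 1.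
Proof.
case: (ltnP m 5) => [m_lt5 | m_ge5] m_ge2.
  move=> [i lt_i Eg]; rewrite -!Eg.
  case: m m_lt5 m_ge2 lt_i {Eg} => [|[|[|[|[|m]]]]] // _ _;
    by case: i => [|[|[|i]]] //= _; rewrite /mmul; xv_eval.
case/(mmem_rooted_rec m_ge5) => [[h h_in Eg] | [h h_in Eg]];
  rewrite !Eg /mmul !(mmem_rooted_out h_in); try lia; by xv_eval.
Qed.

Lemma size_rooted_le m : 4 <= m -> size (rooted (m - 2)) <= size (rooted m).
Proof.
case: (ltnP m 5) => [m_lt5 m_ge4 | /size_rooted_rec-> _]; last exact: leq_addr.
by have -> : m = 4 by lia.
Qed.

Lemma prodpow_rooted_head m d r j : 4 <= m -> size d = size (rooted (m - 2)) ->
  prodpow (d ++ nseq r 0) (rooted m) j = sumn d * xv m.-1 j + prodpow d (rooted (m - 2)) j.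
Proof.
case: (ltnP m 5) => [m_lt5 m_ge4 | m_ge5 _ size_d].
  have -> : m = 4 by lia.
  case: d => [|x [|y [|]]] // _; case: r => [|r] /=; rewrite /mmul /mono1 ?prodpow_nseq0; nia.
rewrite rooted_rec // prodpow_cat ?size_map // prodpow_map_mmul // prodpow_nseq0.
by rewrite addn0.
Qed.

Lemma prodpow_rooted_tail m d e : 4 <= m -> size d = size (rooted (m - 2)) ->
  size (d ++ e) = size (rooted m) -> sumn e <= prodpow (d ++ e) (rooted m) m.
Proof.
case: (ltnP m 5) => [m_lt5 m_ge4 | m_ge5 _ size_d].
  have -> : m = 4 by lia.
  case: d => [|x [|y [|]]] // _; case: e => [|z [|]] //= _.
  rewrite /mmul /mono1; xv_eval; lia.
rewrite size_cat size_d (size_rooted_rec m_ge5) => /eqP.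
rewrite eqn_add2l => /eqP size_e.
rewrite prodpow_rooted_rec //; xv_eval; lia.
Qed.

Lemma inA_cofactor n u : 5 <= n -> inA n (mmul (xv n.-1) u) ->
  u (n - 3) = 1 /\ forall j, n - 3 < j -> u j = 0.
Proof.
move=> n_ge5 [/(mmem_rooted_rec n_ge5)[[g g_in Eg] | [g g_in Eg]] dvd_u]; last first.
  by have := Eg n.-1; rewrite /mmul (mmem_rooted_out g_in); xv_eval; lia.
have Eu j : u j = g j by move: (Eg j); rewrite /mmul; lia.
have := mmem_rooted_last2 _ g_in; rewrite (_ : (n - 2).-1 = n - 3); last lia.
have := dvd_u (n - 3); rewrite /mmul Eu; xv_eval => g3_pos g_last2.
split=> [|j lt_j]; first lia.
have [->|lt_j'] : j = n - 2 \/ n - 2 < j by lia.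
  by rewrite Eu; lia.
by rewrite Eu (mmem_rooted_out g_in).
Qed.

Lemma inC_cofactor n v : 5 <= n -> inC n (mmul (xv n) v) ->
  [/\ v (n - 3) = 0, v (n - 2) = 1 & forall j, n - 2 < j -> v j = 0].
Proof.
move=> n_ge5 [/(mmem_rooted_rec n_ge5)[[g g_in Eg] | [h h_in Eh]] dvd_v].
  by have := Eg n; rewrite /mmul (mmem_rooted_out g_in); xv_eval; lia.
have Ev j : v j = xv (n - 2) j + h j by move: (Eh j); rewrite /mmul; lia.
have := mmem_rooted_last2 _ h_in; rewrite (_ : (n - 3).-1 = n - 4); last lia.
have := dvd_v (n - 4); rewrite /mmul Ev; xv_eval => h4_pos h_last2.
split=> [|| j lt_j]; rewrite Ev; first by xv_eval; lia.
  by rewrite (mmem_rooted_out h_in); xv_eval; lia.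
by rewrite (mmem_rooted_out h_in); xv_eval; lia.
Qed.

Lemma cofactor_prod n u v : 5 <= n ->
    inA n (mmul (xv n.-1) u) -> inC n (mmul (xv n) v) ->
  [/\ mmul u v (n - 3) = 1, mmul u v (n - 2) = 1 & forall j, n - 2 < j -> mmul u v j = 0].
Proof.
move=> n_ge5 /(inA_cofactor n_ge5)[u3 u_out] /(inC_cofactor n_ge5)[v3 v2 v_out].
split=> [|| j lt_j]; rewrite /mmul ?u3 ?v3 ?v2 ?u_out ?v_out //; lia.
Qed.

Lemma lexlt_irr s : lexlt s s = false.
Proof. by elim: s => //= x s ->; rewrite ltnn eqxx. Qed.

Lemma lexlt_cat s1 s2 t1 t2 : size s1 = size t1 ->
  lexlt (s1 ++ s2) (t1 ++ t2) = lexlt s1 t1 || (s1 == t1) && lexlt s2 t2.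
Proof.
elim: s1 t1 => [|x s1 IH] [|y t1] //= [/IH->].
by rewrite eqseq_cons; case: (x < y); case: (x == y); case: (lexlt s1 t1).
Qed.

Lemma lexlt_cat_mid s1 s2 t1 t2 x y : size s1 = size t1 -> size s2 = size t2 ->
  lexlt (s1 ++ x ++ s2 ++ y) (t1 ++ x ++ t2 ++ y) = lexlt (s1 ++ s2) (t1 ++ t2).
Proof.
move=> size_s1 size_s2.
by rewrite !lexlt_cat // lexlt_irr eqxx /= lexlt_irr andbF orbF.
Qed.

Section ExprLift.

Variables (m m' : nat) (lift : seq nat -> seq nat).
Hypothesis lexlt_lift : forall a b, size a = size b -> lexlt (lift a) (lift b) = lexlt a b.

Definition lifts_exprs (W M : mono) : Prop :=
  (forall a, is_expr m a W -> is_expr m' (lift a) M) /\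
  (forall d, is_expr m' d M -> exists2 a, is_expr m a W & d = lift a).

Lemma max_expr_lift W M a :
  lifts_exprs W M -> is_max_expr m a W -> is_max_expr m' (lift a) M.
Proof.
case=> expr_lift expr_lifted [a_W a_max]; split; first exact: expr_lift.
move=> _ /expr_lifted[b b_W ->].
have size_ba : size b = size a by case: a_W => ->; case: b_W.
case/orP: (a_max b b_W) => [/eqP-> | b_lt_a]; first by rewrite /lexle eqxx.
by rewrite /lexle lexlt_lift // b_lt_a orbT.
Qed.

Lemma gtR_lift W M W' M' :
  lifts_exprs W M -> lifts_exprs W' M' -> gtR m W W' -> gtR m' M M'.
Proof.
move=> lift_W lift_W' [a [b [a_max b_max b_lt_a]]].
exists (lift a), (lift b); split; [exact: max_expr_lift lift_W a_max | exact: max_expr_lift lift_W' b_max |].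
by rewrite lexlt_lift //; case: a_max => [[-> _]]; case: b_max => [[-> _]].
Qed.

End ExprLift.

Lemma split_at_size (T : Type) (s : seq T) n1 n2 : size s = n1 + n2 ->
  exists2 s1, size s1 = n1 & exists2 s2, size s2 = n2 & s = s1 ++ s2.
Proof.
move=> size_s; exists (take n1 s); first by rewrite size_takel // size_s leq_addr.
by exists (drop n1 s); rewrite ?cat_take_drop // size_drop size_s addKn.
Qed.

Section LiftToPn.

Variable n : nat.
Hypothesis n_ge7 : 7 <= n.
Let n_ge5 : 5 <= n. Proof. lia. Qed.

Local Notation q := (size (rooted (n - 4))).
Local Notation b := (size (rooted (n - 5))).
Local Notation r := (size (rooted (n - 3)) - size (rooted (n - 5))).

(* The first [q] exponents of [a] go to the block A of R_n, the remaining [b] to C. *)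
Definition lift_expr (a : seq nat) : seq nat :=
  take q a ++ nseq b 0 ++ drop q a ++ nseq r 0.

Lemma lexlt_lift_expr a a' : size a = size a' ->
  lexlt (lift_expr a) (lift_expr a') = lexlt a a'.
Proof.
by move=> size_a; rewrite lexlt_cat_mid ?size_take ?size_drop ?size_a // !cat_take_drop.
Qed.

Lemma size_rooted_n2 : size (rooted (n - 2)) = q + b.
Proof.
have -> : n - 4 = n - 2 - 2 by lia. have -> : n - 5 = n - 2 - 3 by lia.
apply: size_rooted_rec; lia.
Qed.

Lemma size_rooted_n3 : b <= size (rooted (n - 3)).
Proof.
have -> : n - 5 = n - 3 - 2 by lia.
apply: size_rooted_le; lia.
Qed.

Lemma prodpow_rooted_n2 d e j : size d = q -> size e = b ->
  prodpow (d ++ e) (rooted (n - 2)) j =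
    sumn d * xv (n - 3) j + prodpow d (rooted (n - 4)) j
    + (sumn e * (xv (n - 2) j + xv (n - 4) j) + prodpow e (rooted (n - 5)) j).
Proof.
have -> : n - 4 = n - 2 - 2 by lia. have -> : n - 5 = n - 2 - 3 by lia.
have -> : n - 3 = (n - 2).-1 by lia.
apply: prodpow_rooted_rec; lia.
Qed.

Lemma prodpow_rooted_n3_head d j : size d = b ->
  prodpow (d ++ nseq r 0) (rooted (n - 3)) j =
    sumn d * xv (n - 4) j + prodpow d (rooted (n - 5)) j.
Proof.
have -> : n - 5 = n - 3 - 2 by lia. have -> : n - 4 = (n - 3).-1 by lia.
apply: prodpow_rooted_head; lia.
Qed.

Lemma prodpow_rooted_n3_tail d e : size d = b -> size (d ++ e) = size (rooted (n - 3)) ->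
  sumn e <= prodpow (d ++ e) (rooted (n - 3)) (n - 3).
Proof. have -> : n - 5 = n - 3 - 2 by lia. by apply: prodpow_rooted_tail; lia. Qed.

Lemma lift_expr_cat a1 a2 : size a1 = q ->
  lift_expr (a1 ++ a2) = a1 ++ nseq b 0 ++ a2 ++ nseq r 0.
Proof. by move=> size_a1; rewrite /lift_expr take_size_cat // drop_size_cat. Qed.

Lemma size_lift_expr a1 a2 : size a1 = q -> size a2 = b ->
  size (lift_expr (a1 ++ a2)) = size (rooted n).
Proof.
move=> size_a1 size_a2; have := size_rooted_n3.
by rewrite lift_expr_cat // (size_rooted_rec n_ge5) size_rooted_n2 !size_cat !size_nseq; lia.
Qed.

Lemma prodpow_lift_expr a1 a2 j : size a1 = q -> size a2 = b ->
  prodpow (lift_expr (a1 ++ a2)) (rooted n) j =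
    sumn a1 * xv n.-1 j + sumn a2 * xv n j + prodpow (a1 ++ a2) (rooted (n - 2)) j.
Proof.
move=> size_a1 size_a2; have sz3 := size_rooted_n3.
rewrite lift_expr_cat // catA (prodpow_rooted_rec j n_ge5) ?size_cat ?size_nseq
  ?size_rooted_n2; try lia.
rewrite !prodpow_rooted_n2 ?size_nseq // prodpow_rooted_n3_head // prodpow_nseq0.
rewrite !sumn_cat !sumn_nseq; nia.
Qed.

Lemma is_expr_lift_expr W M a : W (n - 2) = 1 ->
    (forall j, M j = xv n.-1 j + xv n j + W j) ->
  is_expr (n - 2) a W -> is_expr n (lift_expr a) M.
Proof.
move=> W2 EM /is_exprP[size_a sum_a Ea].
rewrite size_rooted_n2 in size_a.
have [a1 size_a1 [a2 size_a2 Ea12]] := split_at_size size_a; subst a.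
have sum_a2 : sumn a2 = 1.
  have := Ea (n - 2); rewrite W2 prodpow_rooted_n2 // !prodpow_rooted_out; try lia.
  by xv_eval; lia.
have sum_a1 : sumn a1 = 1 by move: sum_a; rewrite sumn_cat; lia.
apply/is_exprP; split; first exact: size_lift_expr.
  by rewrite lift_expr_cat // !sumn_cat !sumn_nseq sum_a1 sum_a2.
by move=> j; rewrite prodpow_lift_expr // sum_a1 sum_a2 Ea EM !mul1n.
Qed.

Lemma prodpow_rooted_top d1 d2 d3 d4 j :
    size d1 = q -> size d2 = b -> size d3 = b -> size d4 = r -> n - 3 <= j ->
  prodpow ((d1 ++ d2) ++ d3 ++ d4) (rooted n) j =
    sumn (d1 ++ d2) * xv n.-1 j + sumn d1 * xv (n - 3) j + sumn d2 * xv (n - 2) j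
    + sumn (d3 ++ d4) * (xv n j + xv (n - 2) j) + prodpow (d3 ++ d4) (rooted (n - 3)) j.
Proof.
move=> size_d1 size_d2 size_d3 size_d4 le_j; have sz3 := size_rooted_n3.
rewrite (prodpow_rooted_rec j n_ge5) ?size_cat ?size_rooted_n2; try lia.
rewrite prodpow_rooted_n2 // !(prodpow_rooted_out _ (m := n - 4)) ?(prodpow_rooted_out _ (m := n - 5));
  try lia.
xv_eval; nia.
Qed.

Lemma is_expr_lifted W M d : W (n - 3) = 1 -> W (n - 2) = 1 ->
    (forall j, n - 2 < j -> W j = 0) -> (forall j, M j = xv n.-1 j + xv n j + W j) ->
  is_expr n d M -> exists2 a, is_expr (n - 2) a W & d = lift_expr a.
Proof.
move=> W3 W2 W_out EM /is_exprP[size_d sum_d Ed]; have sz3 := size_rooted_n3.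
rewrite (size_rooted_rec n_ge5) size_rooted_n2 in size_d.
have [e1 size_e1 [e2 size_e2 Ed12]] := split_at_size size_d.
have [d1 size_d1 [d2 size_d2 Ee1]] := split_at_size size_e1.
have [d3 size_d3 [d4 size_d4 Ee2]] := split_at_size (n1 := b) (n2 := r) (s := e2) ltac:(lia).
subst d e1 e2; have top := prodpow_rooted_top size_d1 size_d2 size_d3 size_d4.
have top_high j : n - 2 <= j -> xv n.-1 j + xv n j + W j =
    sumn (d1 ++ d2) * xv n.-1 j + sumn d2 * xv (n - 2) j + sumn (d3 ++ d4) * (xv n j + xv (n - 2) j).
  move=> le_j; rewrite -EM -Ed top ?(@prodpow_rooted_out (n - 3)); try lia.
  by xv_eval; nia.
move: (top_high n) (top_high n.-1) (top_high (n - 2)) (top (n - 3)).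
rewrite Ed EM W3 W2 !W_out; try lia.
xv_eval; rewrite !sumn_cat => eq_n eq_n1 eq_n2 eq_n3.
have := prodpow_rooted_n3_tail (e := d4) size_d3; rewrite size_cat => tail.
have /natnseq0P d2_0 : sumn d2 == 0 by apply/eqP; lia.
have /natnseq0P d4_0 : sumn d4 == 0 by apply/eqP; lia.
exists (d1 ++ d3); last by rewrite lift_expr_cat // d2_0 d4_0 size_d2 size_d4 -catA.
apply/is_exprP; split; first by rewrite size_cat size_d1 size_d3 size_rooted_n2.
  by move: sum_d; rewrite !sumn_cat; lia.
move=> j; have := Ed j.
rewrite d2_0 d4_0 size_d2 size_d4 -catA -lift_expr_cat // prodpow_lift_expr // EM.
lia.
Qed.

Lemma lifts_exprs_lift_expr W M : W (n - 3) = 1 -> W (n - 2) = 1 ->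
    (forall j, n - 2 < j -> W j = 0) -> (forall j, M j = xv n.-1 j + xv n j + W j) ->
  lifts_exprs (n - 2) n lift_expr W M.
Proof.
move=> W3 W2 W_out EM.
by split=> [a|d]; [apply: is_expr_lift_expr | apply: is_expr_lifted].
Qed.

End LiftToPn.

Theorem lemma3p13 (n : nat) (u u' v v' : mono) :
  7 <= n ->
  inA n (mmul (xv n.-1) u) -> inA n (mmul (xv n.-1) u') ->
  inC n (mmul (xv n) v) -> inC n (mmul (xv n) v') ->
  gtR (n - 2) (mmul u v) (mmul u' v') ->
  gtR n (mmul (mmul (mmul (xv n.-1) (xv n)) u) v)
        (mmul (mmul (mmul (xv n.-1) (xv n)) u') v').
Proof.
move=> n_ge7 uA u'A vC v'C; have n_ge5 : 5 <= n by lia.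
have [W3 W2 W_out] := cofactor_prod n_ge5 uA vC.
have [W'3 W'2 W'_out] := cofactor_prod n_ge5 u'A v'C.
apply: (gtR_lift (lexlt_lift_expr n));
  by apply: lifts_exprs_lift_expr => // j; rewrite /mmul addnA.
Qed.
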